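(* Let $\alpha \vDash n$ be a strong composition with $\ell(\alpha) = r$, and let $\overline{\alpha}$ have length $s$. Write $\{1 \leq j \leq r : \alpha_j > 1\} = \{j_1, \ldots, j_s\}$. Then \[ \deg(\alpha) = \deg(\overline{\alpha}) + \binom{r}{2} - s + j_1 + \cdots + j_s. \]
   Context: A strong composition $\alpha = (\alpha_1, \ldots, \alpha_r)$ of $n$ is a sequence of positive integers summing to $n$, with length $\ell(\alpha) = r$. $\operatorname{coinv}(\alpha) = \#\{1 \leq i < j \leq \ell(\alpha) : \alpha_i < \alpha_j\}$. Let $\mu(\alpha)$ be the weakly decreasing rearrangement of $\alpha$. Define $\deg(\alpha) = \operatorname{coinv}(\alpha) + \sum_{i=1}^{\ell(\alpha)} (i-1)(2\mu(\alpha)_i - 1)$. $\overline{\alpha}$ is the strong composition obtained by subtracting $1$ from every entry of $\alpha$ and deleting the resulting zeros (the empty composition has $\deg = 0$). *)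

From mathcomp Require Import all_boot all_order all_algebra.
Set Implicit Arguments. Unset Strict Implicit. Unset Printing Implicit Defensive.

Definition strong_comp (a : seq nat) : bool := all (fun x => 0 < x) a.

Definition coinv (a : seq nat) : nat :=
  \sum_(0 <= j < size a) \sum_(0 <= i < j) (nth 0 a i < nth 0 a j).

Definition mu (a : seq nat) : seq nat := sort geq a.

(* deg(a) = coinv(a) + sum_{i=1}^{l} (i-1)(2 mu_i - 1); with 0-based i this
   is sum_{i<l} i * (2 mu_i - 1). Each factor 2 mu_i - 1 >= 1 for strong comps. *)
Definition deg (a : seq nat) : nat :=
  coinv a + \sum_(0 <= i < size a) i * (2 * nth 0 (mu a) i - 1).

Definition abar (a : seq nat) : seq nat :=
  [seq x.-1 | x <- a & 1 < x].

From mathcomp Require Import all_boot all_order all_algebra.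
From mathcomp Require Import zify.

Set Implicit Arguments.
Unset Strict Implicit.
Unset Printing Implicit Defensive.

(* Write deg a = coinv a + shape_deg (mu a) and compare both parts with those
   of abar a.  Lowering every entry by one keeps exactly the coinversions
   between entries > 1; the lost ones are the pairs (1, a_j) with a_j > 1, and
   there are sum_i (j_i - 1) - C(s, 2) of them.  Since abar commutes with
   sorting, mu a is mu (abar a) raised by one and padded with r - s ones:
   raising the entry at (0-based) position i adds 2i to shape_deg and a padding
   one at position i adds i, which gives C(r, 2) + C(s, 2) in total. *)

Definition shape_deg (m : seq nat) : nat :=
  \sum_(0 <= i < size m) i * (2 * nth 0 m i - 1).

Definition sum_gt1_idx (a : seq nat) : nat :=
  \sum_(0 <= j < size a | 1 < nth 0 a j) j.

Lemma deg_shape a : deg a = coinv a + shape_deg (mu a).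
Proof. by rewrite /deg /shape_deg /mu size_sort. Qed.

Lemma abar_rcons a x :
  abar (rcons a x) = if 1 < x then rcons (abar a) x.-1 else abar a.
Proof. by rewrite /abar filter_rcons; case: ifP; rewrite ?map_rcons. Qed.

Lemma size_abar_all a : all (fun x => 1 < x) a -> size (abar a) = size a.
Proof. by move=> /all_filterP a_gt1; rewrite size_map a_gt1. Qed.

Lemma mu_abar a : mu (abar a) = abar (mu a).
Proof.
have total_geq : total geq by move=> x y /=; rewrite leq_total.
have trans_geq : transitive geq by move=> x y z /= ? ?; lia.
rewrite /mu /abar (filter_sort total_geq trans_geq).
apply: (homo_sort_map_in (P := fun x => 1 < x)).
- by move=> x y /= ? ? ?; lia.
- by move=> x y z /= ? ? ? ? ?; lia.
- by move=> x y _ _; apply: total_geq.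
- by move=> x y /= ? ? ?; lia.
- by apply/allP => x; rewrite mem_filter => /andP[].
Qed.

Lemma shape_deg_rcons m x :
  shape_deg (rcons m x) = shape_deg m + size m * (2 * x - 1).
Proof.
rewrite /shape_deg size_rcons big_nat_recr //= nth_rcons ltnn eqxx; congr addn.
by apply: eq_big_nat => i /andP[_ lt_i_m]; rewrite nth_rcons lt_i_m.
Qed.

Lemma shape_deg_abar m : sorted geq m -> strong_comp m ->
  shape_deg m = shape_deg (abar m) + 'C(size m, 2) + 'C(size (abar m), 2).
Proof.
elim/last_ind: m => [|m x IH]; first by rewrite /shape_deg big_geq.
rewrite /strong_comp all_rcons => sorted_mx /andP[x_gt0 m_pos].
have x_min : all (leq x) m.
  have sorted_rev : sorted leq (x :: rev m) by rewrite -rev_rcons rev_sorted.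
  by rewrite -all_rev; apply: order_path_min leq_trans sorted_rev.
have sorted_m : sorted geq m by move: sorted_mx; rewrite -cats1 => /cat_sorted2[].
rewrite abar_rcons shape_deg_rcons size_rcons (IH sorted_m m_pos) binS bin1.
case: (ltnP 1 x) => [x_gt1|x_le1].
- have m_gt1 : all (fun y => 1 < y) m.
    by apply: sub_all x_min => y /=; lia.
  rewrite shape_deg_rcons size_rcons binS bin1 size_abar_all //.
  have -> : 2 * x - 1 = (2 * x.-1 - 1) + 2 by lia.
  lia.
- have -> : x = 1 by lia.
  lia.
Qed.

Lemma coinv_rcons a x : coinv (rcons a x) = coinv a + count (fun y => y < x) a.
Proof.
rewrite /coinv size_rcons big_nat_recr //= nth_rcons ltnn eqxx; congr addn.
  apply: eq_big_nat => j /andP[_ lt_j_a].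
  by apply: eq_big_nat => i /andP[_ lt_ij]; rewrite !nth_rcons lt_j_a (ltn_trans lt_ij).
rewrite -sum1_count [in RHS](big_nth 0) [in RHS]big_mkcond.
by apply: eq_big_nat => i /andP[_ lt_i_a]; rewrite nth_rcons lt_i_a; case: ifP.
Qed.

Lemma count_lt_abar a x : strong_comp a -> 1 < x ->
  count (fun y => y < x) a + size (abar a) = count (fun y => y < x.-1) (abar a) + size a.
Proof.
move=> + x_gt1; elim: a => //= y a IH /andP[y_gt0 /IH{}IH].
by rewrite /abar /=; case: (ltnP 1 y) => /= y_gt1; rewrite -/(abar a); lia.
Qed.

Lemma count_lt1 a : strong_comp a -> count (fun y => y < 1) a = 0.
Proof.
move=> a_pos; rewrite -[RHS](count_pred0 a).
by apply: eq_in_count => -[|y] /(allP a_pos).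
Qed.

Lemma sum_gt1_idx_rcons a x :
  sum_gt1_idx (rcons a x) = sum_gt1_idx a + (if 1 < x then size a else 0).
Proof.
rewrite /sum_gt1_idx size_rcons big_mkcond [in RHS]big_mkcond big_nat_recr //=.
rewrite nth_rcons ltnn eqxx; congr addn.
by apply: eq_big_nat => i /andP[_ lt_i_a]; rewrite nth_rcons lt_i_a.
Qed.

Lemma coinv_abar a : strong_comp a ->
  coinv a + 'C(size (abar a), 2) = coinv (abar a) + sum_gt1_idx a.
Proof.
elim/last_ind: a => [|a x IH]; first by rewrite /coinv /sum_gt1_idx !big_nil.
rewrite /strong_comp all_rcons => /andP[x_gt0 a_pos].
have {}IH := IH a_pos.
rewrite abar_rcons sum_gt1_idx_rcons coinv_rcons.
case: (ltnP 1 x) => [x_gt1|x_le1].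
- have := count_lt_abar a_pos x_gt1.
  rewrite coinv_rcons size_rcons binS bin1; lia.
- have -> : x = 1 by lia.
  by rewrite count_lt1 // !addn0 IH.
Qed.

Lemma sum_gt1_idxS a :
  \sum_(0 <= j < size a | 1 < nth 0 a j) j.+1 = sum_gt1_idx a + size (abar a).
Proof.
rewrite size_map size_filter -sum1_count [in RHS](big_nth 0) -big_split /=.
by apply: eq_bigr => j _; rewrite addn1.
Qed.

Import GRing.Theory.
Local Open Scope ring_scope.

Theorem lemma3p3 (a : seq nat) (ha : strong_comp a) :
  (deg a)%:Z =
    (deg (abar a))%:Z + ('C(size a, 2))%:Z - (size (abar a))%:Z
    + (\sum_(0 <= j < size a | 1 < nth 0 a j) j.+1)%N%:Z.
Proof.
have mu_perm : perm_eq (mu a) a by rewrite perm_sort.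
have size_abar_mu : size (abar (mu a)) = size (abar a).
  by rewrite -mu_abar size_sort.
have mu_sorted : sorted geq (mu a) by apply: sort_sorted => x y; apply: leq_total.
have mu_pos : strong_comp (mu a) by rewrite /strong_comp (perm_all _ mu_perm).
have := coinv_abar ha.
rewrite sum_gt1_idxS !deg_shape (shape_deg_abar mu_sorted mu_pos) mu_abar.
rewrite size_abar_mu size_sort.
lia.
Qed.
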